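(* Let $H$ be a finitely generated group, let $\phi\in\operatorname{Aut}(H)$ and let $K$ be a proper subgroup of $H$. Let $G=H\ast_{(K,\phi)}=\langle H, t;\ tkt^{-1}=\phi(k),\ k\in K\rangle$. Then $G$ is residually finite if and only if $H$ is residually finite and $K$ is residually separable in $H$.
   Context: For a group $H$, $\phi\in\operatorname{Aut}(H)$ and a proper subgroup $K\lneq H$, the automorphism-induced HNN-extension $H\ast_{(K,\phi)}$ is the group given by the relative presentation $\langle H, t;\ tkt^{-1}=\phi(k),\ k\in K\rangle$. A subgroup $K$ of $H$ is residually separable in $H$ if for every $x\in H\setminus K$ there exists a finite index normal subgroup $N$ of $H$ such that $x\notin KN$. *)

From Stdlib Require Import List.
Import ListNotations.

Record group := Group {
  carrier :> Type;
  mul : carrier -> carrier -> carrier;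
  one : carrier;
  inv : carrier -> carrier;
  mulA : forall x y z, mul x (mul y z) = mul (mul x y) z;
  mul1g : forall x, mul one x = x;
  mulVg : forall x, mul (inv x) x = one
}.

Arguments mul {g}.
Arguments one {g}.
Arguments inv {g}.

Definition is_subgroup {G : group} (S : G -> Prop) : Prop :=
  S one /\ (forall x y, S x -> S y -> S (mul x y)) /\ (forall x, S x -> S (inv x)).

Definition is_proper_subgroup {G : group} (S : G -> Prop) : Prop :=
  is_subgroup S /\ exists x : G, ~ S x.

Definition is_normal_subgroup {G : group} (N : G -> Prop) : Prop :=
  is_subgroup N /\ forall g x, N x -> N (mul (mul g x) (inv g)).

Definition finite_index {G : group} (N : G -> Prop) : Prop :=
  exists reps : list G, forall g : G, exists r, In r reps /\ N (mul (inv r) g).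

Inductive generated {G : group} (S : list G) : G -> Prop :=
  | gen_one : generated S one
  | gen_base : forall x, In x S -> generated S x
  | gen_mul : forall x y, generated S x -> generated S y -> generated S (mul x y)
  | gen_inv : forall x, generated S x -> generated S (inv x).

Definition finitely_generated (G : group) : Prop :=
  exists S : list G, forall x : G, generated S x.

Definition is_hom {G L : group} (f : G -> L) : Prop :=
  forall x y, f (mul x y) = mul (f x) (f y).

Definition is_aut {G : group} (phi : G -> G) : Prop :=
  is_hom phi /\ (forall x y, phi x = phi y -> x = y) /\ (forall y, exists x, phi x = y).

Definition residually_finite (G : group) : Prop :=
  forall x : G, x <> one ->
    exists N : G -> Prop, is_normal_subgroup N /\ finite_index N /\ ~ N x.

Definition residually_separable {H : group} (K : H -> Prop) : Prop :=
  forall x : H, ~ K x ->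
    exists N : H -> Prop, is_normal_subgroup N /\ finite_index N /\
      ~ (exists k n, K k /\ N n /\ x = mul k n).

(* (G, i, t) is the automorphism-induced HNN extension  <H, t ; t k t^-1 = phi k, k in K>,
   characterised by its universal property (defines G up to isomorphism). *)
Definition is_HNN_extension {H : group} (phi : H -> H) (K : H -> Prop)
    (G : group) (i : H -> G) (t : G) : Prop :=
  is_hom i /\
  (forall k, K k -> mul (mul t (i k)) (inv t) = i (phi k)) /\
  (forall (L : group) (f : H -> L) (s : L),
     is_hom f ->
     (forall k, K k -> mul (mul s (f k)) (inv s) = f (phi k)) ->
     (exists g : G -> L, is_hom g /\ (forall h, g (i h) = f h) /\ g t = s) /\
     (forall g1 g2 : G -> L, is_hom g1 -> is_hom g2 ->
        (forall h, g1 (i h) = g2 (i h)) -> g1 t = g2 t -> forall x, g1 x = g2 x)).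

(* (=>) By Britton's lemma [H] embeds in [G], so it is residually finite; and for [x] not
   in [K] the element [t x t^-1 (phi x)^-1] is nontrivial, so a finite-index normal
   subgroup of [G] avoiding it pulls back to a finite-index normal subgroup [N] of [H]
   with [x] outside [KN].
   (<=) Write [g <> 1] as a reduced word. Residual finiteness of [H] and residual
   separability of [K] give a finite-index normal subgroup [N] modulo which the word stays
   reduced, i.e. none of its pinch elements lies in [KN]; since [H] is finitely generated,
   [N] can moreover be taken [phi]-invariant. Then [G] acts on finitely many levels of
   copies of [H/N]: [H] by left multiplication, [t] by [phi] composed with a bijection
   between right [KN]-cosets of consecutive levels, chosen so that the word lifts the base
   point one level per letter. Reducedness modulo [KN] makes these choices consistent, and
   the kernel of this finite action is a finite-index normal subgroup missing [g].
   Britton's lemma itself is the case [N = 1] of this construction. *)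

From Stdlib Require Import List Arith Lia Classical ClassicalEpsilon
  FunctionalExtensionality ProofIrrelevance PropExtensionality.
Import ListNotations.

Section GroupLemmas.
Context {G : group}.
Implicit Types x y z : G.

Lemma mulgV x : mul x (inv x) = one.
Proof.
  transitivity (mul (mul (inv (inv x)) (inv x)) (mul x (inv x))).
  { rewrite mulVg, mul1g. reflexivity. }
  rewrite <- mulA, (mulA _ (inv x) x (inv x)), mulVg, mul1g. apply mulVg.
Qed.

Lemma mulg1 x : mul x one = x.
Proof. rewrite <- (mulVg _ x), mulA, mulgV, mul1g. reflexivity. Qed.

Lemma mulKg x y : mul (inv x) (mul x y) = y.
Proof. rewrite mulA, mulVg, mul1g. reflexivity. Qed.

Lemma mulKVg x y : mul x (mul (inv x) y) = y.
Proof. rewrite mulA, mulgV, mul1g. reflexivity. Qed.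

Lemma mulgK x y : mul (mul y x) (inv x) = y.
Proof. rewrite <- mulA, mulgV, mulg1. reflexivity. Qed.

Lemma mulgKV x y : mul (mul y (inv x)) x = y.
Proof. rewrite <- mulA, mulVg, mulg1. reflexivity. Qed.

Lemma mulgI x y z : mul x y = mul x z -> y = z.
Proof. intro E. rewrite <- (mulKg x y), E, mulKg. reflexivity. Qed.

Lemma invg_unique x y : mul x y = one -> inv x = y.
Proof. intro E. apply (mulgI x). rewrite mulgV, E. reflexivity. Qed.

Lemma invgK x : inv (inv x) = x.
Proof. apply invg_unique, mulVg. Qed.

Lemma invMg x y : inv (mul x y) = mul (inv y) (inv x).
Proof.
  apply invg_unique. rewrite <- mulA, (mulA _ y (inv y)), mulgV, mul1g, mulgV.
  reflexivity.
Qed.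

Lemma invg1 : inv (@one G) = one.
Proof. apply invg_unique, mul1g. Qed.
End GroupLemmas.

Section Homomorphisms.
Context {G L : group} (f : G -> L) (Hf : is_hom f).

Lemma hom1 : f one = one.
Proof. apply (mulgI (f one)). rewrite <- Hf, !mulg1. reflexivity. Qed.

Lemma homV x : f (inv x) = inv (f x).
Proof. symmetry. apply invg_unique. rewrite <- Hf, mulgV. apply hom1. Qed.
End Homomorphisms.

Lemma hom_comp {A B C : group} (f : A -> B) (g : B -> C) :
  is_hom f -> is_hom g -> is_hom (fun x => g (f x)).
Proof. intros Hf Hg x y. rewrite Hf, Hg. reflexivity. Qed.

Section Subgroups.
Context {G : group} (N : G -> Prop) (HN : is_subgroup N).

Lemma group1 : N one.
Proof. apply HN. Qed.

Lemma groupM x y : N x -> N y -> N (mul x y).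
Proof. apply HN. Qed.

Lemma groupV x : N x -> N (inv x).
Proof. apply HN. Qed.

Lemma groupV_iff x : N (inv x) <-> N x.
Proof. split; intro Hx; [rewrite <- invgK|]; apply groupV; exact Hx. Qed.

Lemma groupMr_iff x y : N y -> (N (mul x y) <-> N x).
Proof.
  intro Hy; split; intro Hxy; [|apply groupM; assumption].
  rewrite <- (mulgK y x). apply groupM; [assumption|]. apply groupV; assumption.
Qed.

Lemma lcoset_trans r x y : N (mul (inv r) x) -> N (mul (inv r) y) -> N (mul (inv x) y).
Proof.
  intros Hx Hy. replace (mul (inv x) y) with (mul (inv (mul (inv r) x)) (mul (inv r) y)).
  - apply groupM; [apply groupV|]; assumption.
  - rewrite invMg, invgK, <- mulA, mulKVg. reflexivity.
Qed.
End Subgroups.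

Section NormalSubgroups.
Context {G : group}.

Lemma normal_subgroup (N : G -> Prop) : is_normal_subgroup N -> is_subgroup N.
Proof. intros [HN _]; exact HN. Qed.

Lemma normal_conj (N : G -> Prop) : is_normal_subgroup N ->
  forall g x, N x -> N (mul (mul g x) (inv g)).
Proof. intros [_ HN]; exact HN. Qed.

Lemma normal_conjV (N : G -> Prop) : is_normal_subgroup N ->
  forall g x, N x -> N (mul (mul (inv g) x) g).
Proof. intros HN g x Hx. rewrite <- (invgK g) at 2. apply normal_conj; assumption. Qed.

Lemma normal_ext (N N' : G -> Prop) :
  (forall x, N x <-> N' x) -> is_normal_subgroup N -> is_normal_subgroup N'.
Proof.
  intros E [[Hone [Hmul Hinv]] Hconj]. repeat split.
  - apply E; assumption.
  - intros x y Hx Hy. apply E, Hmul; apply E; assumption.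
  - intros x Hx. apply E, Hinv, E; assumption.
  - intros g x Hx. apply E, Hconj, E; assumption.
Qed.

Lemma normalT : is_normal_subgroup (fun _ : G => True).
Proof. repeat split. Qed.

Lemma normal1 : is_normal_subgroup (fun x : G => x = one).
Proof.
  repeat split.
  - intros x y -> ->. apply mulg1.
  - intros x ->. apply invg1.
  - intros g x ->. rewrite mulg1. apply mulgV.
Qed.

Lemma normalI (N1 N2 : G -> Prop) :
  is_normal_subgroup N1 -> is_normal_subgroup N2 ->
  is_normal_subgroup (fun x => N1 x /\ N2 x).
Proof.
  intros [[a1 [b1 c1]] d1] [[a2 [b2 c2]] d2].
  repeat split; intros; firstorder.
Qed.

Lemma normal_preimage {L : group} (f : G -> L) (N : L -> Prop) :
  is_hom f -> is_normal_subgroup N -> is_normal_subgroup (fun x => N (f x)).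
Proof.
  intros Hf [[H1 [H2 H3]] H4]. repeat split.
  - rewrite (hom1 f Hf). assumption.
  - intros x y Hx Hy. rewrite Hf. auto.
  - intros x Hx. rewrite (homV f Hf). auto.
  - intros g x Hx. rewrite !Hf, (homV f Hf). auto.
Qed.
End NormalSubgroups.

Lemma finite_index_reps {G : group} (N : G -> Prop) : finite_index N ->
  exists (R : list G) (rep : G -> G), forall g, In (rep g) R /\ N (mul (inv (rep g)) g).
Proof.
  intros [R HR]. exists R. apply (choice (fun g r => In r R /\ N (mul (inv r) g))). exact HR.
Qed.

Section FiniteIndex.
Context {G : group}.

Lemma finite_index_of_code {B : Type} (N : G -> Prop) (code : G -> B) (codes : list B) :
  (forall g, In (code g) codes) ->
  (forall g g', code g = code g' -> N (mul (inv g) g')) -> finite_index N.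
Proof.
  intros Hcodes Hcode.
  set (pick := fun c => epsilon (inhabits (@one G)) (fun g => code g = c)).
  exists (map pick codes). intro g. exists (pick (code g)). split.
  - apply in_map, Hcodes.
  - apply Hcode. apply (epsilon_spec _ (fun g' => code g' = code g)). exists g. reflexivity.
Qed.

Lemma finite_indexT : finite_index (fun _ : G => True).
Proof. exists [one]. intro g. exists one. simpl. auto. Qed.

Lemma finite_index_ext (N N' : G -> Prop) :
  (forall x, N x <-> N' x) -> finite_index N -> finite_index N'.
Proof.
  intros E [R HR]. exists R. intro g. destruct (HR g) as [r [Hr Hn]].
  exists r. split; [|apply E]; assumption.
Qed.

Lemma finite_indexI (N1 N2 : G -> Prop) :
  is_subgroup N1 -> is_subgroup N2 -> finite_index N1 -> finite_index N2 ->
  finite_index (fun x => N1 x /\ N2 x).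
Proof.
  intros HN1 HN2 Hf1 Hf2.
  destruct (finite_index_reps _ Hf1) as [R1 [rep1 Hrep1]].
  destruct (finite_index_reps _ Hf2) as [R2 [rep2 Hrep2]].
  apply (finite_index_of_code _ (fun g => (rep1 g, rep2 g)) (list_prod R1 R2)).
  - intro g. apply in_prod; apply Hrep1 || apply Hrep2.
  - intros g g' E. injection E as E1 E2. split.
    + apply (lcoset_trans _ HN1 (rep1 g)); [|rewrite E1]; apply Hrep1.
    + apply (lcoset_trans _ HN2 (rep2 g)); [|rewrite E2]; apply Hrep2.
Qed.

Lemma finite_index_preimage {L : group} (f : G -> L) (N : L -> Prop) :
  is_hom f -> is_subgroup N -> finite_index N -> finite_index (fun x => N (f x)).
Proof.
  intros Hf HN HfN. destruct (finite_index_reps _ HfN) as [R [rep Hrep]].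
  apply (finite_index_of_code _ (fun g => rep (f g)) R).
  - intro g. apply Hrep.
  - intros g g' E. rewrite Hf, (homV f Hf).
    apply (lcoset_trans _ HN (rep (f g))); [|rewrite E]; apply Hrep.
Qed.
End FiniteIndex.

Fixpoint lists_over {A : Type} (D : list A) (k : nat) : list (list A) :=
  match k with
  | 0 => [[]]
  | S k' => flat_map (fun d => map (cons d) (lists_over D k')) D
  end.

Lemma in_lists_over {A : Type} (D : list A) (c : list A) :
  (forall x, In x c -> In x D) -> In c (lists_over D (length c)).
Proof.
  induction c as [|x c IH]; intro Hc; simpl; [auto|].
  apply in_flat_map. exists x. split; [apply Hc; left; reflexivity|].
  apply in_map, IH. intros y Hy. apply Hc. right. exact Hy.
Qed.

Lemma pigeonhole_nat {A : Type} (D : list A) (f : nat -> A) :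
  (forall k, In (f k) D) -> exists a b, a < b /\ f a = f b.
Proof.
  intro HD. apply NNPP. intro Hno.
  assert (Hnd : NoDup (map f (seq 0 (S (length D))))).
  { apply NoDup_map_NoDup_ForallPairs; [|apply seq_NoDup].
    intros a b _ _ E. destruct (Nat.lt_trichotomy a b) as [Hab|[Hab|Hab]];
      [| assumption |]; exfalso; apply Hno; eauto. }
  apply NoDup_incl_length with (l' := D) in Hnd.
  - rewrite length_map, length_seq in Hnd. lia.
  - intros y Hy. apply in_map_iff in Hy. destruct Hy as [k [<- _]]. apply HD.
Qed.

Record rperm (X : Type) (R : X -> X -> Prop) (I : X -> Prop) := RPerm {
  fw : X -> X;
  bw : X -> X;
  fwK : forall x, fw (bw x) = x;
  bwK : forall x, bw (fw x) = x;
  fwR : forall x y, R x y -> R (fw x) (fw y);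
  bwR : forall x y, R x y -> R (bw x) (bw y);
  fwI : forall x, I (fw x) <-> I x
}.
Arguments fw {X R I}.
Arguments bw {X R I}.
Arguments RPerm {X R I}.

Section SymmetricGroup.
Context {X : Type} (R : X -> X -> Prop) (I : X -> Prop).

Lemma rperm_ext (p q : rperm X R I) : (forall x, fw p x = fw q x) -> p = q.
Proof.
  intro E.
  assert (Eb : forall x, bw p x = bw q x).
  { intro x. rewrite <- (fwK _ _ _ q x) at 1. rewrite <- E. apply bwK. }
  destruct p as [f1 b1 a1 c1 d1 e1 g1], q as [f2 b2 a2 c2 d2 e2 g2]; simpl in *.
  assert (f1 = f2) by (apply functional_extensionality; exact E).
  assert (b1 = b2) by (apply functional_extensionality; exact Eb).
  subst. f_equal; apply proof_irrelevance.
Qed.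

Lemma bwI (p : rperm X R I) x : I (bw p x) <-> I x.
Proof. rewrite <- (fwI _ _ _ p), fwK. reflexivity. Qed.

Definition rperm_mul (p q : rperm X R I) : rperm X R I.
Proof.
  refine (RPerm (fun x => fw p (fw q x)) (fun x => bw q (bw p x)) _ _ _ _ _).
  - intro x. rewrite !fwK. reflexivity.
  - intro x. rewrite !bwK. reflexivity.
  - intros x y Hxy. apply fwR, fwR, Hxy.
  - intros x y Hxy. apply bwR, bwR, Hxy.
  - intro x. rewrite !fwI. reflexivity.
Defined.

Definition rperm_one : rperm X R I.
Proof.
  refine (RPerm (fun x => x) (fun x => x) _ _ _ _ _); auto. reflexivity.
Defined.

Definition rperm_inv (p : rperm X R I) : rperm X R I :=
  RPerm (bw p) (fw p) (bwK _ _ _ p) (fwK _ _ _ p) (bwR _ _ _ p) (fwR _ _ _ p) (bwI p).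

Definition Sym : group.
Proof.
  refine (Group (rperm X R I) rperm_mul rperm_one rperm_inv _ _ _);
    intros; apply rperm_ext; intro; simpl; [reflexivity | reflexivity | apply bwK].
Defined.
End SymmetricGroup.

Section ActionKernel.
Context {G : group} {X : Type} (R : X -> X -> Prop) (I : X -> Prop).
Hypothesis R_refl : forall x, R x x.
Hypothesis R_sym : forall x y, R x y -> R y x.
Hypothesis R_trans : forall x y z, R x y -> R y z -> R x z.
Context (rho : G -> Sym R I) (Hrho : is_hom rho).

Let act (g : G) : X -> X := fw (rho g : rperm X R I).

Lemma actM g h x : act (mul g h) x = act g (act h x).
Proof. unfold act. rewrite Hrho. reflexivity. Qed.

Lemma actV g x : act (inv g) x = bw (rho g : rperm X R I) x.
Proof. unfold act. rewrite (homV rho Hrho). reflexivity. Qed.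

Lemma act_I g x : I (act g x) <-> I x.
Proof. apply fwI. Qed.

Definition action_kernel (g : G) : Prop := forall x, I x -> R (act g x) x.

Lemma action_kernel_normal : is_normal_subgroup action_kernel.
Proof.
  unfold action_kernel. repeat split.
  - intros x _. unfold act. rewrite (hom1 rho Hrho). apply R_refl.
  - intros g h Hg Hh x Hx. rewrite actM. apply (R_trans _ (act h x)); [|apply Hh, Hx].
    apply Hg, act_I, Hx.
  - intros g Hg x Hx. rewrite actV. apply R_sym.
    pose proof (Hg (bw (rho g : rperm X R I) x)) as Hgx. unfold act in Hgx.
    rewrite fwK in Hgx. apply Hgx, bwI, Hx.
  - intros g h Hh x Hx. rewrite !actM, actV.
    pose proof (fwR _ _ _ (rho g : rperm X R I) _ _
                  (Hh (bw (rho g : rperm X R I) x) (proj2 (bwI R I _ x) Hx))) as Hgx.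
    unfold act. rewrite fwK in Hgx. exact Hgx.
Qed.

Lemma action_kernel_finite_index (D : list X) :
  (forall d, In d D -> I d) -> (forall x, I x -> exists d, In d D /\ R x d) ->
  finite_index action_kernel.
Proof.
  intros HDI HD.
  destruct (choice (fun x d => I x -> In d D /\ R x d)) as [rep Hrep].
  { intro x. destruct (classic (I x)) as [Hx|Hx]; [|exists x; tauto].
    destruct (HD x Hx) as [d Hd]. exists d. auto. }
  apply (finite_index_of_code _ (fun g => map (fun d => rep (act g d)) D)
                                (lists_over D (length D))).
  - intro g. rewrite <- (length_map (fun d => rep (act g d))). apply in_lists_over.
    intros y Hy. apply in_map_iff in Hy. destruct Hy as [d [<- Hd]].
    apply Hrep, act_I, HDI, Hd.
  - intros g g' E x Hx. rewrite actM, actV.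
    rewrite <- (bwK _ _ _ (rho g : rperm X R I) x) at 2. apply bwR.
    destruct (HD x Hx) as [d [Hd Hxd]].
    assert (Hgd : I (act g d)) by apply act_I, HDI, Hd.
    assert (Hg'd : I (act g' d)) by apply act_I, HDI, Hd.
    assert (Erep : rep (act g d) = rep (act g' d)).
    { exact (proj1 map_ext_in_iff E d Hd). }
    apply (R_trans _ (act g' d)); [apply fwR, Hxd|].
    apply (R_trans _ (rep (act g' d))); [apply Hrep, Hg'd|].
    rewrite <- Erep. apply (R_trans _ (act g d)); [apply R_sym, Hrep, Hgd|].
    apply fwR, R_sym, Hxd.
Qed.
End ActionKernel.

Definition phinv {H : group} (phi : H -> H) (y : H) : H :=
  epsilon (inhabits one) (fun x => phi x = y).

Section Automorphism.
Context {H : group} (phi : H -> H) (Haut : is_aut phi).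

Lemma aut_hom : is_hom phi.
Proof. apply Haut. Qed.

Lemma phinvK y : phi (phinv phi y) = y.
Proof.
  destruct Haut as [_ [_ Hsurj]].
  apply (epsilon_spec _ (fun x => phi x = y)), Hsurj.
Qed.

Lemma phiK x : phinv phi (phi x) = x.
Proof. destruct Haut as [_ [Hinj _]]. apply Hinj, phinvK. Qed.

Lemma phinv_hom : is_hom (phinv phi).
Proof.
  intros x y. destruct Haut as [Hhom [Hinj _]]. apply Hinj.
  rewrite Hhom, !phinvK. reflexivity.
Qed.

Lemma phi_eq1 x : x = one <-> phi x = one.
Proof.
  split; intro E.
  - rewrite E. apply (hom1 _ aut_hom).
  - destruct Haut as [Hhom [Hinj _]]. apply Hinj. rewrite E, (hom1 _ Hhom). reflexivity.
Qed.
End Automorphism.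

Lemma hom_lcoset_eq_generated {G L : group} (f g : G -> L) (N : L -> Prop) (S : list G) :
  is_hom f -> is_hom g -> is_normal_subgroup N -> (forall x, generated S x) ->
  (forall s, In s S -> N (mul (inv (f s)) (g s))) ->
  forall x, N (mul (inv (f x)) (g x)).
Proof.
  intros Hf Hg HN HS Hgen x. pose proof (normal_subgroup _ HN) as HNs.
  induction (HS x) as [|s Hs|x y _ IHx _ IHy|x _ IHx].
  - rewrite (hom1 f Hf), (hom1 g Hg), mulVg. apply group1, HNs.
  - apply Hgen, Hs.
  - replace (mul (inv (f (mul x y))) (g (mul x y)))
      with (mul (mul (mul (inv (f y)) (mul (inv (f x)) (g x))) (f y)) (mul (inv (f y)) (g y))).
    + apply groupM; [exact HNs| |exact IHy]. apply normal_conjV; assumption.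
    + rewrite Hf, Hg, invMg, !mulA, mulgK. reflexivity.
  - replace (mul (inv (f (inv x))) (g (inv x)))
      with (mul (mul (f x) (inv (mul (inv (f x)) (g x)))) (inv (f x))).
    + apply normal_conj; [assumption|]. apply groupV; assumption.
    + rewrite (homV f Hf), (homV g Hg), invgK, invMg, invgK, !mulA, mulgK. reflexivity.
Qed.

Section IteratedPreimage.
Context {H : group} (f : H -> H) (Hf : is_hom f) (N : H -> Prop).
Hypothesis HN : is_normal_subgroup N.
Hypothesis HNfi : finite_index N.

Lemma iter_hom k : is_hom (Nat.iter k f).
Proof.
  induction k as [|k IH]; intros x y; simpl; [reflexivity|]. rewrite IH. apply Hf.
Qed.

Lemma iter_preimages_normal_finite_index m :
  is_normal_subgroup (fun h => forall k, k < m -> N (Nat.iter k f h)) /\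
  finite_index (fun h => forall k, k < m -> N (Nat.iter k f h)).
Proof.
  induction m as [|m [IHn IHfi]].
  - split; [apply (normal_ext (fun _ => True))|apply (finite_index_ext (fun _ => True))];
      try (intro; split; [intros _ k Hk; lia|tauto]);
      [apply normalT|apply finite_indexT].
  - assert (E : forall h, (forall k, k < m -> N (Nat.iter k f h)) /\ N (Nat.iter m f h) <->
                          (forall k, k < S m -> N (Nat.iter k f h))).
    { intro h. split.
      - intros [Hlt Hm] k Hk. destruct (Nat.eq_dec k m) as [->|]; [exact Hm|apply Hlt; lia].
      - intro Hle. split; [intros k Hk|]; apply Hle; lia. }
    assert (Hpre : is_normal_subgroup (fun h => N (Nat.iter m f h)))
      by (apply normal_preimage; [apply iter_hom|exact HN]).
    split; [apply (normal_ext _ _ E), normalI; assumption|].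
    apply (finite_index_ext _ _ E), finite_indexI;
      [apply normal_subgroup; assumption|apply normal_subgroup; assumption|assumption|].
    apply finite_index_preimage; [apply iter_hom|apply normal_subgroup, HN|exact HNfi].
Qed.
End IteratedPreimage.

Section InvariantSubgroup.
Context {H : group} (phi : H -> H) (Haut : is_aut phi).
Hypothesis Hfg : finitely_generated H.

(* By pigeonhole, two powers of [phi] send every generator into the same left coset of [N]. *)
Lemma aut_power_lcoset_trivial (N : H -> Prop) :
  is_normal_subgroup N -> finite_index N ->
  exists p, 0 < p /\ forall h, N (mul (inv h) (Nat.iter p phi h)).
Proof.
  intros HN HNfi. destruct Hfg as [S HS].
  pose proof (normal_subgroup _ HN) as HNs.
  destruct (finite_index_reps _ HNfi) as [R [rep Hrep]].
  set (code := fun k => map (fun s => rep (Nat.iter k phi s)) S).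
  destruct (pigeonhole_nat (lists_over R (length S)) code) as [a [b [Hab Ecode]]].
  { intro k. rewrite <- (length_map (fun s => rep (Nat.iter k phi s))). apply in_lists_over.
    intros r Hr. apply in_map_iff in Hr. destruct Hr as [s [<- _]]. apply Hrep. }
  assert (Hab_eq : forall h, N (mul (inv (Nat.iter a phi h)) (Nat.iter b phi h))).
  { apply (hom_lcoset_eq_generated _ _ _ S); try apply iter_hom; try apply aut_hom;
      try assumption.
    intros s Hs. apply (lcoset_trans _ HNs (rep (Nat.iter a phi s))); [apply Hrep|].
    rewrite (proj1 map_ext_in_iff Ecode s Hs). apply Hrep. }
  exists (b - a). split; [lia|]. intro h.
  specialize (Hab_eq (Nat.iter a (phinv phi) h)).
  replace b with (b - a + a) in Hab_eq by lia.
  rewrite Nat.iter_add in Hab_eq.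
  assert (Hiter : forall x, Nat.iter a phi (Nat.iter a (phinv phi) x) = x).
  { clear - Haut. induction a as [|a IH]; intro x; [reflexivity|].
    rewrite Nat.iter_succ_r, Nat.iter_succ, phinvK by exact Haut. apply IH. }
  rewrite Hiter in Hab_eq. exact Hab_eq.
Qed.

Lemma aut_invariant_normal_subgroup (N : H -> Prop) :
  is_normal_subgroup N -> finite_index N ->
  exists M : H -> Prop, is_normal_subgroup M /\ finite_index M /\
    (forall h, M h -> N h) /\ (forall h, M h <-> M (phi h)).
Proof.
  intros HN HNfi. pose proof (normal_subgroup _ HN) as HNs.
  destruct (aut_power_lcoset_trivial N HN HNfi) as [p [Hp Hper]].
  assert (Hperiod : forall h, N h <-> N (Nat.iter p phi h)).
  { intro h. split; intro Hh.
    - rewrite <- (mulKVg h (Nat.iter p phi h)). apply groupM; auto.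
    - apply (groupMr_iff _ HNs _ (mul (inv h) (Nat.iter p phi h))); [apply Hper|].
      rewrite mulKVg. exact Hh. }
  destruct (iter_preimages_normal_finite_index phi (aut_hom phi Haut) N HN HNfi p)
    as [HMn HMfi].
  exists (fun h => forall k, k < p -> N (Nat.iter k phi h)).
  split; [exact HMn|]. split; [exact HMfi|]. split; [intros h Hh; apply (Hh 0), Hp|].
  intro h. split; intros Hh k Hk; [rewrite <- Nat.iter_succ_r|].
  - destruct (Nat.eq_dec (S k) p) as [<-|Hne];
      [apply (proj1 (Hperiod h)), (Hh 0); lia|apply Hh; lia].
  - destruct k as [|k].
    + apply (proj2 (Hperiod h)). replace p with (S (p - 1)) by lia.
      rewrite Nat.iter_succ_r. apply Hh. lia.
    + rewrite Nat.iter_succ_r. apply Hh. lia.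
Qed.
End InvariantSubgroup.

Definition subgroup_group {G : group} (S : G -> Prop) (HS : is_subgroup S) : group.
Proof.
  refine (Group {x : G | S x}
    (fun a b => exist _ (mul (proj1_sig a) (proj1_sig b))
                  (groupM S HS _ _ (proj2_sig a) (proj2_sig b)))
    (exist _ one (group1 S HS))
    (fun a => exist _ (inv (proj1_sig a)) (groupV S HS _ (proj2_sig a))) _ _ _);
  intros; apply eq_sig_hprop; try (intros; apply proof_irrelevance); simpl;
  [apply mulA | apply mul1g | apply mulVg].
Defined.

(* A word [[(e1, g1); ...; (en, gn)]] with tail [h0] stands for
   [i g1 t^e1 ... i gn t^en i h0], where [true] codes [t] and [false] codes [t^-1]. *)
Section Words.
Context {H : group} (phi : H -> H).

Definition pinch (P : H -> Prop) (e1 e2 : bool) (g2 : H) : Prop :=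
  (e1 = true /\ e2 = false /\ P g2) \/ (e1 = false /\ e2 = true /\ P (phinv phi g2)).

Fixpoint reduced (P : H -> Prop) (l : list (bool * H)) : Prop :=
  match l with
  | (e1, _) :: ((e2, g2) :: _) as tl => ~ pinch P e1 e2 g2 /\ reduced P tl
  | _ => True
  end.

Fixpoint pinch_candidates (l : list (bool * H)) : list H :=
  match l with
  | (e1, _) :: ((e2, g2) :: _) as tl =>
      match e1, e2 with
      | true, false => [g2]
      | false, true => [phinv phi g2]
      | _, _ => []
      end ++ pinch_candidates tl
  | _ => []
  end.

Lemma reduced_iff (P : H -> Prop) l :
  reduced P l <-> forall z, In z (pinch_candidates l) -> ~ P z.
Proof.
  induction l as [|[e1 g1] l IH]; simpl; [tauto|].
  destruct l as [|[e2 g2] l]; [tauto|]. rewrite IH. unfold pinch. split.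
  - intros [Hpinch Hl] z Hz. apply in_app_or in Hz. destruct Hz as [Hz|Hz]; [|auto].
    intro Hzp. apply Hpinch.
    destruct e1, e2; simpl in Hz; try contradiction; destruct Hz as [<-|[]]; auto.
  - intros Hz. split.
    + intros [[-> [-> Hp]]|[-> [-> Hp]]]; (eapply Hz; [|exact Hp]); simpl; auto.
    + intros z Hz'. apply Hz, in_or_app. right. exact Hz'.
Qed.

Lemma reduced_mono (P Q : H -> Prop) l :
  (forall h, Q h -> P h) -> reduced P l -> reduced Q l.
Proof. rewrite !reduced_iff. intros HQP Hl z Hz Hq. exact (Hl z Hz (HQP z Hq)). Qed.

Lemma reduced_cons_head (P : H -> Prop) e g g' l :
  reduced P ((e, g) :: l) -> reduced P ((e, g') :: l).
Proof. destruct l as [|[]]; simpl; auto. Qed.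

Lemma reduced_tail (P : H -> Prop) a l : reduced P (a :: l) -> reduced P l.
Proof. destruct a; destruct l as [|[]]; simpl; tauto. Qed.

Context {G : group} (i : H -> G) (t : G).

Definition tpow (e : bool) : G := if e then t else inv t.

Fixpoint word_eval (h0 : H) (l : list (bool * H)) : G :=
  match l with
  | [] => i h0
  | (e, g) :: l' => mul (mul (i g) (tpow e)) (word_eval h0 l')
  end.
End Words.

Section NormalForm.
Context {H G : group} (phi : H -> H) (K : H -> Prop) (i : H -> G) (t : G).
Hypothesis Haut : is_aut phi.
Hypothesis HNN : is_HNN_extension phi K G i t.

Lemma HNN_hom : is_hom i.
Proof. apply HNN. Qed.

Lemma HNN_conj k : K k -> mul (mul t (i k)) (inv t) = i (phi k).
Proof. apply HNN. Qed.

Lemma HNN_conjV g : K (phinv phi g) -> mul (mul (inv t) (i g)) t = i (phinv phi g).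
Proof.
  intro Hk. pose proof (HNN_conj _ Hk) as E. rewrite (phinvK phi Haut) in E.
  rewrite <- E, !mulA, mulVg, mul1g, mulgKV. reflexivity.
Qed.

Lemma HNN_subgroup_full (S : G -> Prop) :
  is_subgroup S -> (forall h, S (i h)) -> S t -> forall x, S x.
Proof.
  intros HS Hi Ht x. destruct HNN as [Hhom [Hrel Huniv]].
  set (f := fun h => (exist S (i h) (Hi h) : subgroup_group S HS)).
  set (s := (exist S t Ht : subgroup_group S HS)).
  destruct (Huniv _ f s) as [[g [Hg [Hgi Hgt]]] _].
  { intros a b. apply eq_sig_hprop; [intros; apply proof_irrelevance|]. apply Hhom. }
  { intros k Hk. apply eq_sig_hprop; [intros; apply proof_irrelevance|]. apply Hrel, Hk. }
  destruct (Huniv G i t Hhom Hrel) as [_ Huniq].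
  assert (E : proj1_sig (g x) = x).
  { apply (Huniq (fun x => proj1_sig (g x)) (fun x => x)).
    - intros a b. rewrite Hg. reflexivity.
    - intros a b. reflexivity.
    - intro h. rewrite Hgi. reflexivity.
    - rewrite Hgt. reflexivity. }
  rewrite <- E. apply proj2_sig.
Qed.

Definition has_reduced_form (x : G) : Prop :=
  exists h0 l, reduced phi K l /\ x = word_eval i t h0 l.

Lemma has_reduced_form_mul_base h x : has_reduced_form x -> has_reduced_form (mul (i h) x).
Proof.
  intros [h0 [[|[e g] l] [Hl ->]]].
  - exists (mul h h0), []. split; [exact I|]. symmetry. apply HNN_hom.
  - exists h0, ((e, mul h g) :: l). split; [eapply reduced_cons_head; eauto|].
    simpl. rewrite HNN_hom, !mulA. reflexivity.
Qed.

Lemma has_reduced_form_mul_t e x : has_reduced_form x -> has_reduced_form (mul (tpow t e) x).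
Proof.
  intros [h0 [[|[e2 g2] l] [Hl ->]]].
  - exists h0, [(e, one)]. split; [exact I|]. simpl.
    rewrite (hom1 i HNN_hom), mul1g. reflexivity.
  - destruct (classic (pinch phi K e e2 g2)) as [[[-> [-> Hk]]|[-> [-> Hk]]]|Hnp].
    + replace (mul (tpow t true) (word_eval i t h0 ((false, g2) :: l)))
        with (mul (i (phi g2)) (word_eval i t h0 l))
        by (rewrite <- (HNN_conj _ Hk); simpl; rewrite !mulA; reflexivity).
      apply has_reduced_form_mul_base. exists h0, l. split; [eapply reduced_tail|]; eauto.
    + replace (mul (tpow t false) (word_eval i t h0 ((true, g2) :: l)))
        with (mul (i (phinv phi g2)) (word_eval i t h0 l))
        by (rewrite <- (HNN_conjV _ Hk); simpl; rewrite !mulA; reflexivity).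
      apply has_reduced_form_mul_base. exists h0, l. split; [eapply reduced_tail|]; eauto.
    + exists h0, ((e, one) :: (e2, g2) :: l). split; [split; assumption|].
      simpl. rewrite (hom1 i HNN_hom), mul1g. reflexivity.
Qed.

Lemma reduced_form_exists x : has_reduced_form x.
Proof.
  set (S := fun y => forall x, has_reduced_form x ->
                     has_reduced_form (mul y x) /\ has_reduced_form (mul (inv y) x)).
  assert (HS : is_subgroup S).
  { split; [|split].
    - intros y Hy. rewrite invg1, !mul1g. split; exact Hy.
    - intros a b Ha Hb y Hy. rewrite invMg, <- !mulA.
      split; [apply Ha, Hb, Hy | apply Hb, Ha, Hy].
    - intros a Ha y Hy. rewrite invgK. split; apply Ha, Hy. }
  assert (Hx1 : has_reduced_form one).
  { exists one, []. split; [exact I|]. symmetry. apply (hom1 i HNN_hom). }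
  rewrite <- (mulg1 x). apply (HNN_subgroup_full S HS); [| |exact Hx1].
  - intros h y Hy. split; [|rewrite <- (homV i HNN_hom)]; apply has_reduced_form_mul_base, Hy.
  - intros y Hy. split; [apply (has_reduced_form_mul_t true)|apply (has_reduced_form_mul_t false)];
      exact Hy.
Qed.
End NormalForm.

Section Swap.
Context {X : Type}.

Definition swap (x y z : X) : X :=
  if excluded_middle_informative (z = x) then y
  else if excluded_middle_informative (z = y) then x else z.

Lemma swap_l (x y : X) : swap x y x = y.
Proof. unfold swap. destruct excluded_middle_informative; congruence. Qed.

Lemma swap_other (x y z : X) : z <> x -> z <> y -> swap x y z = z.
Proof. intros. unfold swap. repeat destruct excluded_middle_informative; congruence. Qed.

Lemma swapK (x y z : X) : swap x y (swap x y z) = z.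
Proof. unfold swap. repeat (destruct excluded_middle_informative; subst; try congruence). Qed.

Lemma swap_pred (Q : X -> Prop) (x y z : X) : Q x -> Q y -> (Q (swap x y z) <-> Q z).
Proof. intros. unfold swap. repeat (destruct excluded_middle_informative; subst; try tauto). Qed.

Lemma partial_bijection_extension (cs : list (X * X)) :
  NoDup (map fst cs) -> NoDup (map snd cs) ->
  exists s si : X -> X,
    (forall x, s (si x) = x) /\ (forall x, si (s x) = x) /\
    (forall c, In c cs -> s (fst c) = snd c) /\
    (forall Q : X -> Prop, (forall c, In c cs -> Q (fst c) /\ Q (snd c)) ->
       forall x, Q (s x) <-> Q x).
Proof.
  induction cs as [|[a b] cs IH]; intros Hfst Hsnd.
  - exists (fun x => x), (fun x => x). repeat split; simpl; tauto.
  - simpl in Hfst, Hsnd. apply NoDup_cons_iff in Hfst as [Ha Hfst].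
    apply NoDup_cons_iff in Hsnd as [Hb Hsnd].
    destruct (IH Hfst Hsnd) as [s [si [sK [siK [Hcs Hpred]]]]].
    exists (fun z => swap (s a) b (s z)), (fun z => si (swap (s a) b z)).
    split; [|split; [|split]].
    + intro x. rewrite sK. apply swapK.
    + intro x. rewrite swapK. apply siK.
    + intros [a' b'] [E|Hin]; [injection E as <- <-; apply swap_l|].
      pose proof (Hcs _ Hin) as Hsa'. simpl in Hsa' |- *. rewrite Hsa'. apply swap_other.
      * intro E. apply Ha. rewrite <- (siK a), <- E, <- Hsa', siK.
        apply (in_map fst) in Hin. exact Hin.
      * intros ->. apply Hb, (in_map snd _ _ Hin).
    + intros Q HQ x.
      assert (HQab : Q a /\ Q b) by (apply (HQ (a, b)); left; reflexivity).
      assert (HQs := Hpred Q (fun c Hc => HQ c (or_intror Hc))).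
      rewrite swap_pred; [apply HQs|apply HQs|]; tauto.
Qed.
End Swap.

Definition KN {H : group} (K N : H -> Prop) (z : H) : Prop :=
  exists k n, K k /\ N n /\ z = mul k n.

Lemma KN_mono {H : group} (K N N' : H -> Prop) z :
  (forall h, N h -> N' h) -> KN K N z -> KN K N' z.
Proof. intros HNN' [k [n [Hk [Hn E]]]]. exists k, n. auto. Qed.

Definition same_cell {H : group} (N : H -> Prop) (p q : H * nat) : Prop :=
  snd p = snd q /\ N (mul (inv (fst p)) (fst q)).

Definition below {H : group} (n : nat) (p : H * nat) : Prop := snd p <= n.

Section Cells.
Context {H : group} (N : H -> Prop) (HN : is_subgroup N).

Lemma same_cell_refl p : same_cell N p p.
Proof. split; [reflexivity|]. rewrite mulVg. apply group1, HN. Qed.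

Lemma same_cell_sym p q : same_cell N p q -> same_cell N q p.
Proof.
  intros [E Hn]. split; [symmetry; exact E|].
  rewrite <- (invgK (fst p)), <- invMg. apply groupV; assumption.
Qed.

Lemma same_cell_trans p q r : same_cell N p q -> same_cell N q r -> same_cell N p r.
Proof.
  intros [E1 H1] [E2 H2]. split; [congruence|].
  rewrite <- (mulKVg (fst q) (fst r)), mulA. apply groupM; assumption.
Qed.

Definition lmul_perm (n : nat) (h : H) : rperm (H * nat) (same_cell N) (below n).
Proof.
  refine (RPerm (fun p => (mul h (fst p), snd p)) (fun p => (mul (inv h) (fst p), snd p))
            _ _ _ _ _).
  - intros [a y]. simpl. rewrite mulKVg. reflexivity.
  - intros [a y]. simpl. rewrite mulKg. reflexivity.
  - intros [a y] [b y'] [E Hn]. split; [exact E|]. simpl in *.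
    rewrite invMg, mulA, mulgKV. exact Hn.
  - intros [a y] [b y'] [E Hn]. split; [exact E|]. simpl in *.
    rewrite invMg, mulA, invgK, mulgK. exact Hn.
  - intros [a y]. reflexivity.
Defined.

Lemma lmul_perm_hom n : is_hom (fun h => (lmul_perm n h : Sym (same_cell N) (below n))).
Proof. intros a b. apply rperm_ext. intros [x y]. simpl. rewrite mulA. reflexivity. Qed.
End Cells.

Section Core.
Context {H G : group} (phi : H -> H) (K : H -> Prop) (i : H -> G) (t : G).
Hypothesis Haut : is_aut phi.
Hypothesis HK : is_subgroup K.
Hypothesis HNN : is_HNN_extension phi K G i t.
Context (N : H -> Prop).
Hypothesis HN : is_normal_subgroup N.
Hypothesis Nphi : forall h, N h <-> N (phi h).

Let HNs : is_subgroup N := normal_subgroup N HN.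

Lemma KN_subgroup : is_subgroup (KN K N).
Proof.
  split; [|split].
  - exists one, one. split; [apply group1, HK|]. split; [apply group1, HNs|].
    rewrite mulg1. reflexivity.
  - intros x y [k [n [Hk [Hn ->]]]] [k' [n' [Hk' [Hn' ->]]]].
    exists (mul k k'), (mul (mul (mul (inv k') n) k') n').
    split; [apply groupM; assumption|]. split.
    + apply groupM; [exact HNs| |exact Hn']. apply normal_conjV; assumption.
    + rewrite !mulA, <- (mulA _ k k' (inv k')), mulgV, mulg1. reflexivity.
  - intros x [k [n [Hk [Hn ->]]]].
    exists (inv k), (mul (mul k (inv n)) (inv k)). split; [apply groupV; assumption|]. split.
    + apply normal_conj; [exact HN|]. apply groupV; assumption.
    + rewrite !mulA, mulVg, mul1g, invMg. reflexivity.
Qed.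

Lemma KN_K k : K k -> KN K N k.
Proof.
  intro Hk. exists k, one. split; [exact Hk|]. split; [apply group1, HNs|].
  apply eq_sym, mulg1.
Qed.

Lemma KN_N n : N n -> KN K N n.
Proof.
  intro Hn. exists one, n. split; [apply group1, HK|]. split; [exact Hn|].
  apply eq_sym, mul1g.
Qed.

Definition KN_rep (a : H) : H := epsilon (inhabits one) (fun b => KN K N (mul b (inv a))).

Lemma KN_rep_spec a : KN K N (mul (KN_rep a) (inv a)).
Proof.
  apply (epsilon_spec _ (fun b => KN K N (mul b (inv a)))).
  exists a. rewrite mulgV. apply group1, KN_subgroup.
Qed.

Lemma KN_repV a : KN K N (mul a (inv (KN_rep a))).
Proof.
  rewrite <- (invgK a) at 1. rewrite <- invMg. apply groupV, KN_rep_spec. exact KN_subgroup.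
Qed.

Lemma KN_rep_eq a b : KN K N (mul b (inv a)) -> KN_rep a = KN_rep b.
Proof.
  intro Hab. unfold KN_rep. f_equal. apply functional_extensionality. intro c.
  apply propositional_extensionality.
  replace (mul c (inv b)) with (mul (mul c (inv a)) (inv (mul b (inv a))))
    by (rewrite invMg, invgK, !mulA, mulgKV; reflexivity).
  split; intro Hc.
  - apply groupM; [exact KN_subgroup|exact Hc|]. apply groupV; [exact KN_subgroup|exact Hab].
  - apply (groupMr_iff _ KN_subgroup _ (inv (mul b (inv a))));
      [apply groupV; [exact KN_subgroup|exact Hab]|exact Hc].
Qed.

Lemma KN_rep_idem a : KN_rep (KN_rep a) = KN_rep a.
Proof. symmetry. apply KN_rep_eq, KN_rep_spec. Qed.

Lemma KN_rep_mull m a : KN K N m -> KN_rep (mul m a) = KN_rep a.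
Proof. intro Hm. symmetry. apply KN_rep_eq. rewrite mulgK. exact Hm. Qed.

Lemma KN_rep1 : KN K N (KN_rep one).
Proof. pose proof (KN_rep_spec one) as E. rewrite invg1, mulg1 in E. exact E. Qed.

Lemma KN_rep_eq1 x : KN_rep x = KN_rep one -> KN K N x.
Proof.
  intro E. pose proof (KN_repV x) as Hx. rewrite E in Hx.
  exact (proj1 (groupMr_iff _ KN_subgroup x _ (groupV _ KN_subgroup _ KN_rep1)) Hx).
Qed.

Definition rep_point (p : H * nat) : Prop := KN_rep (fst p) = fst p.

Section Trajectory.
Context (h0 : H).

(* [trajectory l] and [length l] are the coordinates of the image of [(one, 0)]
   under [word_eval i t h0 l]; each letter climbs one level. *)
Definition step (e : bool) (b : H) : H :=
  if e then phi (mul (mul b (inv (KN_rep b))) (KN_rep one))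
  else mul (mul (phinv phi b) (inv (KN_rep (phinv phi b)))) (KN_rep one).

Fixpoint trajectory (l : list (bool * H)) : H :=
  match l with
  | [] => h0
  | (e, g) :: l' => mul g (step e (trajectory l'))
  end.

(* The values prescribed to the action of [t] on representative points. *)
Fixpoint constraints (l : list (bool * H)) : list ((H * nat) * (H * nat)) :=
  match l with
  | [] => []
  | (e, g) :: l' =>
     (if e then ((KN_rep (trajectory l'), length l'), (KN_rep one, S (length l')))
      else ((KN_rep one, S (length l')), (KN_rep (phinv phi (trajectory l')), length l')))
     :: constraints l'
  end.

Lemma constraints_below l c :
  In c (constraints l) -> below (length l) (fst c) /\ below (length l) (snd c).
Proof.
  unfold below. induction l as [|[e g] l IH]; simpl; [tauto|]. intros [<-|Hc].
  - destruct e; simpl; lia.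
  - apply IH in Hc. lia.
Qed.

Lemma constraints_rep l c :
  In c (constraints l) -> rep_point (fst c) /\ rep_point (snd c).
Proof.
  unfold rep_point.
  induction l as [|[e g] l IH]; simpl; [tauto|]. intros [<-|Hc]; [|exact (IH Hc)].
  destruct e; simpl; rewrite !KN_rep_idem; split; reflexivity.
Qed.

Lemma KN_trajectory_false g l :
  KN_rep (trajectory ((false, g) :: l)) = KN_rep one -> KN K N g.
Proof.
  intro E. apply KN_rep_eq1 in E. simpl in E. unfold step in E.
  refine (proj1 (groupMr_iff _ KN_subgroup _ _ _) E).
  apply groupM; [exact KN_subgroup|apply KN_repV|apply KN_rep1].
Qed.

Lemma KN_trajectory_true g l :
  KN_rep (phinv phi (trajectory ((true, g) :: l))) = KN_rep one -> KN K N (phinv phi g).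
Proof.
  intro E. apply KN_rep_eq1 in E. simpl in E. unfold step in E.
  rewrite (phinv_hom phi Haut), (phiK phi Haut) in E.
  refine (proj1 (groupMr_iff _ KN_subgroup _ _ _) E).
  apply groupM; [exact KN_subgroup|apply KN_repV|apply KN_rep1].
Qed.

(* Two constraints can only clash at consecutive letters [t] then [t^-1] (or the converse),
   and there the clash is exactly a pinch modulo [KN]. *)
Lemma constraints_NoDup l :
  reduced phi (KN K N) l ->
  NoDup (map fst (constraints l)) /\ NoDup (map snd (constraints l)).
Proof.
  induction l as [|[e g] l IH]; intro Hl; simpl; [split; constructor|].
  destruct (IH (reduced_tail _ _ _ _ Hl)) as [IHfst IHsnd].
  split; constructor; try assumption; intro Hin; apply in_map_iff in Hin;
    destruct Hin as [c [Ec Hc]];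
    (destruct l as [|[e' g'] l']; [contradiction|]);
    (destruct Hc as [<-|Hc];
     [|apply constraints_below in Hc; destruct e; simpl in Ec; rewrite Ec in Hc;
       unfold below in Hc; simpl in Hc; lia]);
    destruct e, e'; simpl in Ec;
    pose proof (f_equal snd Ec) as Elev; pose proof (f_equal fst Ec) as Erep;
    simpl in Elev, Erep; try lia;
    apply (proj1 Hl); unfold pinch.
  - left. split; [reflexivity|]. split; [reflexivity|].
    apply (KN_trajectory_false g' l'). exact (eq_sym Erep).
  - right. split; [reflexivity|]. split; [reflexivity|].
    apply (KN_trajectory_true g' l'). exact (eq_sym Erep).
Qed.
End Trajectory.

(* Extends a map on representative points to all points, [KN]-equivariantly
   on the left. *)
Definition KN_extend (f : H * nat -> H * nat) (p : H * nat) : H * nat :=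
  let q := f (KN_rep (fst p), snd p) in
  (mul (mul (fst p) (inv (KN_rep (fst p)))) (fst q), snd q).

Lemma KN_extend_mull f k p :
  K k ->
  KN_extend f (mul k (fst p), snd p) = (mul k (fst (KN_extend f p)), snd (KN_extend f p)).
Proof.
  intro Hk. unfold KN_extend. simpl. rewrite (KN_rep_mull k (fst p) (KN_K k Hk)), !mulA.
  reflexivity.
Qed.

Lemma KN_extend_cell f p q :
  same_cell N p q -> same_cell N (KN_extend f p) (KN_extend f q).
Proof.
  destruct p as [a y], q as [b y']. intros [E Hab]. simpl in E, Hab. subst y'.
  assert (Erep : KN_rep a = KN_rep b).
  { apply KN_rep_eq, KN_N.
    replace (mul b (inv a)) with (mul (mul a (mul (inv a) b)) (inv a))
      by (rewrite mulKVg; reflexivity).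
    apply normal_conj; assumption. }
  unfold KN_extend. simpl. rewrite <- Erep. split; [reflexivity|]. simpl.
  set (r := KN_rep a). set (c := fst (f (r, y))).
  replace (mul (inv (mul (mul a (inv r)) c)) (mul (mul b (inv r)) c))
    with (mul (mul (mul (inv c) r) (mul (inv a) b)) (inv (mul (inv c) r)))
    by (rewrite !invMg, !invgK, !mulA; reflexivity).
  apply normal_conj; assumption.
Qed.

Lemma KN_extendK f f' :
  (forall p, f (f' p) = p) -> (forall p, rep_point p -> rep_point (f' p)) ->
  forall p, KN_extend f (KN_extend f' p) = p.
Proof.
  intros Hff' Hf' [a y]. unfold KN_extend. simpl.
  set (q := f' (KN_rep a, y)).
  assert (Hq : KN_rep (fst q) = fst q) by (apply Hf', KN_rep_idem).
  rewrite KN_rep_mull by apply KN_repV.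
  rewrite Hq, <- surjective_pairing. unfold q. rewrite Hff'. simpl.
  rewrite mulgK, mulgKV. reflexivity.
Qed.

Section TAction.
Context (n : nat) (s si : H * nat -> H * nat).
Hypothesis sK : forall p, s (si p) = p.
Hypothesis siK : forall p, si (s p) = p.
Hypothesis s_rep : forall p, rep_point p -> rep_point (s p).
Hypothesis si_rep : forall p, rep_point p -> rep_point (si p).
Hypothesis s_below : forall p, below n (s p) <-> below n p.

Definition t_perm : rperm (H * nat) (same_cell N) (below n).
Proof.
  refine (RPerm (fun p => (phi (fst (KN_extend s p)), snd (KN_extend s p)))
                (fun p => KN_extend si (phinv phi (fst p), snd p)) _ _ _ _ _).
  - intros [a y]. cbn [fst snd]. rewrite KN_extendK by assumption.
    cbn [fst snd]. rewrite (phinvK phi Haut). reflexivity.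
  - intros p. cbn [fst snd]. rewrite (phiK phi Haut), <- surjective_pairing.
    apply KN_extendK; assumption.
  - intros p q Hpq. destruct (KN_extend_cell s p q Hpq) as [E Hn].
    split; [exact E|]. cbn [fst snd].
    rewrite <- (homV phi (aut_hom phi Haut)), <- (aut_hom phi Haut).
    apply (proj1 (Nphi _)), Hn.
  - intros [a y] [b y'] [E Hn]. apply KN_extend_cell. split; [exact E|]. simpl in *.
    apply (proj2 (Nphi _)).
    rewrite (aut_hom phi Haut), (homV phi (aut_hom phi Haut)), !(phinvK phi Haut). exact Hn.
  - intros [a y]. exact (s_below (KN_rep a, y)).
Defined.

Lemma t_perm_conj k : K k ->
  mul (mul (t_perm : Sym (same_cell N) (below n)) (lmul_perm N n k)) (inv (t_perm : Sym _ _)) =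
  lmul_perm N n (phi k).
Proof.
  intro Hk. apply rperm_ext. intros [x y].
  change (fw t_perm (fw (lmul_perm N n k) (bw t_perm (x, y)))
          = fw (lmul_perm N n (phi k)) (x, y)).
  unfold t_perm, lmul_perm. cbn [fw bw fst snd].
  rewrite KN_extend_mull by exact Hk. rewrite KN_extendK by assumption. cbn [fst snd].
  rewrite (aut_hom phi Haut), (phinvK phi Haut). reflexivity.
Qed.

Lemma trajectory_eval (rho : G -> Sym (same_cell N) (below n)) h0 l :
  is_hom rho -> (forall h, rho (i h) = lmul_perm N n h) -> rho t = t_perm ->
  (forall c, In c (constraints h0 l) -> s (fst c) = snd c) ->
  fw (rho (word_eval i t h0 l) : rperm _ _ _) (one, 0) = (trajectory h0 l, length l).
Proof.
  intros Hrho Hri Hrt. induction l as [|[e g] l IH]; intro Hc.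
  - simpl. rewrite Hri. simpl. rewrite mulg1. reflexivity.
  - simpl word_eval. rewrite !Hrho. simpl fw.
    rewrite IH by (intros c Hc'; apply Hc; right; exact Hc').
    rewrite Hri. pose proof (Hc _ (or_introl eq_refl)) as Hhead.
    destruct e; simpl tpow; simpl in Hhead.
    + rewrite Hrt. simpl. unfold KN_extend. simpl. rewrite Hhead. reflexivity.
    + rewrite (homV rho Hrho), Hrt. simpl. unfold KN_extend. simpl.
      rewrite <- Hhead, siK. reflexivity.
Qed.
End TAction.

Lemma HNN_separating_action h0 w :
  reduced phi (KN K N) w -> (w = [] -> ~ N h0) ->
  exists rho : G -> Sym (same_cell N) (below (length w)), is_hom rho /\
    ~ same_cell N (fw (rho (word_eval i t h0 w) : rperm _ _ _) (one, 0)) (one, 0).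
Proof.
  intros Hw Hh0.
  destruct (constraints_NoDup h0 w Hw) as [Hfst Hsnd].
  destruct (partial_bijection_extension _ Hfst Hsnd) as [s [si [sK [siK [Hcs Hpred]]]]].
  assert (Hpred_rep : forall p, rep_point (s p) <-> rep_point p).
  { apply Hpred. intros c Hc. apply (constraints_rep h0 w c Hc). }
  assert (s_rep : forall p, rep_point p -> rep_point (s p)) by (intro p; apply Hpred_rep).
  assert (si_rep : forall p, rep_point p -> rep_point (si p))
    by (intros p Hp; apply Hpred_rep; rewrite sK; exact Hp).
  assert (s_below : forall p, below (length w) (s p) <-> below (length w) p).
  { apply Hpred. intros c Hc. apply (constraints_below h0 w c Hc). }
  destruct HNN as [Hi [Hrel Huniv]].
  destruct (Huniv (Sym (same_cell N) (below (length w))) (lmul_perm N (length w))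
                  (t_perm (length w) s si sK siK s_rep si_rep s_below)
                  (lmul_perm_hom N (length w)) (t_perm_conj _ _ _ _ _ _ _ _))
    as [[rho [Hrho [Hri Hrt]]] _].
  exists rho. split; [exact Hrho|].
  rewrite (trajectory_eval _ _ _ sK siK s_rep si_rep s_below rho h0 w Hrho Hri Hrt Hcs).
  intros [Elev Hn]. destruct w as [|a w]; [|discriminate Elev].
  apply (Hh0 eq_refl). simpl in Hn. rewrite mulg1 in Hn. apply (groupV_iff _ HNs), Hn.
Qed.
End Core.

Lemma cells_finite_index {H G : group} (N : H -> Prop) (n : nat)
  (rho : G -> Sym (same_cell N) (below n)) :
  is_normal_subgroup N -> finite_index N -> is_hom rho ->
  is_normal_subgroup (action_kernel (same_cell N) (below n) rho) /\
  finite_index (action_kernel (same_cell N) (below n) rho).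
Proof.
  intros HN HNfi Hrho. pose proof (normal_subgroup _ HN) as HNs.
  split; [apply action_kernel_normal; try assumption|].
  - apply same_cell_refl; assumption.
  - apply same_cell_sym; assumption.
  - apply same_cell_trans; assumption.
  - destruct HNfi as [R HR].
    apply (action_kernel_finite_index _ _ (same_cell_sym N HNs)
             (same_cell_trans N HNs) rho Hrho (list_prod R (seq 0 (S n)))).
    + intros [r y] Hd. apply in_prod_iff in Hd. destruct Hd as [_ Hy].
      apply in_seq in Hy. unfold below. simpl. lia.
    + intros [h y] Hy. destruct (HR h) as [r [Hr Hrh]]. exists (r, y). split.
      * apply in_prod; [exact Hr|]. apply in_seq. unfold below in Hy. simpl in Hy. lia.
      * apply same_cell_sym; [exact HNs|]. split; [reflexivity|exact Hrh].
Qed.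

Lemma residually_separable_avoid {H : group} (K : H -> Prop) (zs : list H) :
  residually_separable K -> (forall z, In z zs -> ~ K z) ->
  exists N, is_normal_subgroup N /\ finite_index N /\ forall z, In z zs -> ~ KN K N z.
Proof.
  intros Hsep. induction zs as [|z zs IH]; intro Hzs.
  - exists (fun _ => True). split; [apply normalT|]. split; [apply finite_indexT|]. simpl; tauto.
  - destruct IH as [N1 [HN1 [HN1fi HN1zs]]]; [intros z' Hz'; apply Hzs; right; exact Hz'|].
    destruct (Hsep z) as [Nz [HNz [HNzfi HNzz]]]; [apply Hzs; left; reflexivity|].
    exists (fun h => Nz h /\ N1 h). split; [apply normalI; assumption|]. split.
    + apply finite_indexI; try apply normal_subgroup; assumption.
    + intros z' [<-|Hz'] HKN.
      * apply HNzz. exact (KN_mono K _ _ _ (fun h Hh => proj1 Hh) HKN).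
      * apply (HN1zs z' Hz'). exact (KN_mono K _ _ _ (fun h Hh => proj2 Hh) HKN).
Qed.

Section HNN.
Context {H G : group} (phi : H -> H) (K : H -> Prop) (i : H -> G) (t : G).
Hypothesis Haut : is_aut phi.
Hypothesis HK : is_subgroup K.
Hypothesis HNN : is_HNN_extension phi K G i t.

Lemma Britton_lemma h0 w :
  reduced phi K w -> (w = [] -> h0 <> one) -> word_eval i t h0 w <> one.
Proof.
  intros Hw Hh0 E.
  assert (HwKN : reduced phi (KN K (fun h => h = one)) w).
  { apply (reduced_mono phi K); [|exact Hw].
    intros h [k [n [Hk [-> ->]]]]. rewrite mulg1. exact Hk. }
  destruct (HNN_separating_action phi K i t Haut HK HNN _ normal1 (phi_eq1 phi Haut) h0 w
              HwKN Hh0) as [rho [Hrho Hmoved]].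
  apply Hmoved. rewrite E, (hom1 rho Hrho).
  apply same_cell_refl, normal_subgroup, normal1.
Qed.

Lemma HNN_base_injective h : i h = one -> h = one.
Proof. intro E. apply NNPP. intro Hh. apply (Britton_lemma h [] I (fun _ => Hh)), E. Qed.

Lemma residually_finite_base : residually_finite G -> residually_finite H.
Proof.
  intros HG x Hx.
  destruct (HG (i x)) as [NG [HNG [HNGfi HxNG]]]; [intro E; apply Hx, HNN_base_injective, E|].
  exists (fun h => NG (i h)). split; [apply normal_preimage; [apply HNN|exact HNG]|].
  split; [apply finite_index_preimage; [apply HNN|apply normal_subgroup, HNG|exact HNGfi]|].
  exact HxNG.
Qed.

(* If [x = k n] then the element [t x t^-1 (phi x)^-1] is a conjugate of
   [t n t^-1 (phi n)^-1]. *)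
Lemma residually_separable_subgroup : residually_finite G -> residually_separable K.
Proof.
  intros HG x Hx.
  assert (Hi : is_hom i) by apply HNN.
  assert (Hiphi : is_hom (fun h => i (phi h))) by (apply hom_comp; [apply Haut|exact Hi]).
  set (w := [(true, @one H); (false, x)]).
  assert (Hw : reduced phi K w).
  { split; [|exact I]. intros [[_ [_ Hxk]]|[E _]]; [exact (Hx Hxk)|discriminate E]. }
  destruct (HG (word_eval i t (inv (phi x)) w)) as [NG [HNG [HNGfi Hsep]]].
  { apply Britton_lemma; [exact Hw|discriminate]. }
  pose proof (normal_subgroup _ HNG) as HNGs.
  exists (fun h => NG (i h) /\ NG (i (phi h))).
  split; [apply normalI; apply normal_preimage; assumption|].
  split; [apply finite_indexI; try (apply finite_index_preimage; assumption);
          apply normal_subgroup, normal_preimage; assumption|].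
  intros [k [n [Hk [[Hn Hphin] ->]]]]. apply Hsep.
  replace (word_eval i t (inv (phi (mul k n))) w)
    with (mul (mul (mul (mul t (i k)) (inv t))
                   (mul (mul (mul t (i n)) (inv t)) (inv (i (phi n)))))
              (inv (i (phi k)))).
  - rewrite (HNN_conj phi K i t HNN k Hk). apply normal_conj; [exact HNG|].
    apply groupM; [exact HNGs| |apply groupV; assumption].
    apply normal_conj; assumption.
  - simpl. rewrite (hom1 i Hi), mul1g, (aut_hom phi Haut), invMg, !Hi, !(homV i Hi), !mulA,
      mulgKV.
    reflexivity.
Qed.

Lemma residually_finite_HNN :
  finitely_generated H -> residually_finite H -> residually_separable K ->
  residually_finite G.
Proof.
  intros Hfg HH Hsep x Hx.
  destruct (reduced_form_exists phi K i t Haut HNN x) as [h0 [l [Hl ->]]].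
  destruct (residually_separable_avoid K (pinch_candidates phi l) Hsep
              (proj1 (reduced_iff phi K l) Hl)) as [N1 [HN1 [HN1fi HN1l]]].
  assert (HN0 : exists N0 : H -> Prop,
             is_normal_subgroup N0 /\ finite_index N0 /\ (l = [] -> ~ N0 h0)).
  { destruct l as [|a l].
    - destruct (HH h0) as [N0 HN0]; [|exists N0; tauto].
      intros ->. apply Hx. apply (hom1 i (HNN_hom phi K i t HNN)).
    - exists (fun _ => True). split; [apply normalT|]. split; [apply finite_indexT|discriminate]. }
  destruct HN0 as [N0 [HN0 [HN0fi HN0h0]]].
  destruct (aut_invariant_normal_subgroup phi Haut Hfg (fun h => N1 h /\ N0 h))
    as [N [HN [HNfi [HNsub Nphi]]]].
  { apply normalI; assumption. }
  { apply finite_indexI; try apply normal_subgroup; assumption. }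
  assert (HlN : reduced phi (KN K N) l).
  { apply reduced_iff. intros z Hz HzN. apply (HN1l z Hz).
    apply (KN_mono K N); [intros h Hh; apply HNsub, Hh|exact HzN]. }
  destruct (HNN_separating_action phi K i t Haut HK HNN N HN Nphi h0 l HlN
              (fun E HNh0 => HN0h0 E (proj2 (HNsub _ HNh0)))) as [rho [Hrho Hmoved]].
  destruct (cells_finite_index N (length l) rho HN HNfi Hrho) as [Hker Hkerfi].
  exists (action_kernel (same_cell N) (below (length l)) rho).
  split; [exact Hker|]. split; [exact Hkerfi|].
  intro Hxker. apply Hmoved, Hxker. unfold below. simpl. lia.
Qed.
End HNN.

Theorem theoremA (H : group) (phi : H -> H) (K : H -> Prop)
  (G : group) (i : H -> G) (t : G) :
  finitely_generated H ->
  is_aut phi ->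
  is_proper_subgroup K ->
  is_HNN_extension phi K G i t ->
  (residually_finite G <-> residually_finite H /\ residually_separable K).
Proof.
  intros Hfg Haut [HK _] HNN. split.
  - intro HG. split.
    + exact (residually_finite_base phi K i t Haut HK HNN HG).
    + exact (residually_separable_subgroup phi K i t Haut HK HNN HG).
  - intros [HH Hsep]. exact (residually_finite_HNN phi K i t Haut HK HNN Hfg HH Hsep).
Qed.
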